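(* Let $\Sigma\in\mathbb{R}^{N\times N}$ be a diagonal matrix with positive diagonal, $\mu\in\mathbb{R}^N$, $\gamma\in[0,1]$, and $\mathcal T$ any binary tree whose leaves are the assets $1,\dots,N$. Then the weight vector produced by the HRP-$\Sigma\mu$ algorithm is proportional to the Markowitz solution $\Sigma^{-1}\mu$.
   Context: HRP-$\Sigma\mu$ algorithm (inputs $\Sigma,\mu,\mathcal T,\gamma$), defined recursively. At a leaf (asset $i$) return $\hat w=(1)$, $v=\Sigma_{ii}$, $s=\mu_i$. At an internal node $n$ with left and right subtrees having leaf index sets $L,R$: recursively obtain $(\hat w_L,v_L,s_L)$ and $(\hat w_R,v_R,s_R)$; set $c=\hat w_L^\top\Sigma_{LR}\hat w_R$, $\Delta=v_Lv_R-\gamma^2c^2$, $\alpha_L^{\mathrm{raw}}=(v_Rs_L-\gamma cs_R)/\Delta$, $\alpha_R^{\mathrm{raw}}=(v_Ls_R-\gamma cs_L)/\Delta$, $Z=|\alpha_L^{\mathrm{raw}}|+|\alpha_R^{\mathrm{raw}}|$, $\alpha_k=\alpha_k^{\mathrm{raw}}/Z$; the node representative is the stacked vector $\hat w_n=(\alpha_L\hat w_L,\alpha_R\hat w_R)\in\mathbb{R}^{L\cup R}$, with $v_n=\hat w_n^\top\Sigma_{nn}\hat w_n$ and $s_n=\hat w_n^\top\mu_n$. The output weight vector is the representative at the root. *)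

From mathcomp Require Import all_boot all_order all_algebra.
Set Implicit Arguments. Unset Strict Implicit. Unset Printing Implicit Defensive.
Import Order.TTheory GRing.Theory Num.Theory.
Local Open Scope ring_scope.

Inductive btree (N : nat) : Type :=
| BLeaf of 'I_N
| BNode of btree N & btree N.

Fixpoint leaves N (t : btree N) : seq 'I_N :=
  match t with
  | BLeaf i => [:: i]
  | BNode l r => leaves l ++ leaves r
  end.

Definition tree_on_assets N (t : btree N) : Prop :=
  perm_eq (leaves t) (enum 'I_N).

Section HRP.
Variables (R : realFieldType) (N : nat).
Variables (Sigma : 'M[R]_N) (mu : 'cV[R]_N) (gamma : R).

(* Node representatives are stored as vectors of R^N extended by zero
   outside the leaf set of the node; then
   w_L^T Sigma_{LR} w_R = (wL^T Sigma wR), stacking = aL wL + aR wR, etc. *)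
Fixpoint hrp (t : btree N) : 'cV[R]_N * R * R :=
  match t with
  | BLeaf i => (\col_j (j == i)%:R, Sigma i i, mu i 0)
  | BNode l r =>
      let: (wL, vL, sL) := hrp l in
      let: (wR, vR, sR) := hrp r in
      let c := (wL^T *m Sigma *m wR) 0 0 in
      let D := vL * vR - gamma ^+ 2 * c ^+ 2 in
      let aLraw := (vR * sL - gamma * c * sR) / D in
      let aRraw := (vL * sR - gamma * c * sL) / D in
      let Z := `|aLraw| + `|aRraw| in
      let w := (aLraw / Z) *: wL + (aRraw / Z) *: wR in
      (w, (w^T *m Sigma *m w) 0 0, (w^T *m mu) 0 0)
  end.

Definition hrp_weights (t : btree N) : 'cV[R]_N := (hrp t).1.1.
End HRP.

Definition proportional (R : fieldType) N (u v : 'cV[R]_N) : Prop :=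
  exists a b : R, (a != 0 \/ b != 0) /\ a *: u = b *: v.

From mathcomp Require Import all_boot all_order all_algebra.
From mathcomp Require Import ring.
Set Implicit Arguments. Unset Strict Implicit. Unset Printing Implicit Defensive.
Import Order.TTheory GRing.Theory Num.Theory.
Local Open Scope ring_scope.

(* For diagonal Sigma, representatives of disjoint subtrees are uncorrelated
   (c = 0), so gamma never enters and each node just rescales its children.
   Let x_A be Sigma^-1 mu restricted to a leaf set A.  Every representative w
   satisfies s w = v x_A, where v = w' Sigma w and s = w' mu: at a leaf this
   reads mu_i e_i = Sigma_ii x_{i}, and if both children satisfy it, the
   combination (v_R s_L w_L + v_L s_R w_R) / (v_L v_R Z) is a multiple of
   x_L + x_R, for which the identity follows from x' Sigma x = x' mu.  At the
   root x is Sigma^-1 mu, and v = 0 forces w = 0. *)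

Lemma col_dotE (R : pzSemiRingType) n (u v : 'cV[R]_n) :
  (u^T *m v) 0 0 = \sum_i u i 0 * v i 0.
Proof. by rewrite !mxE; apply: eq_bigr => i _; rewrite mxE. Qed.

Lemma mul_diag_mx_col (R : pzSemiRingType) n (S : 'M[R]_n) (v : 'cV[R]_n) :
  is_diag_mx S -> S *m v = \col_i (S i i * v i 0).
Proof.
move=> /is_diag_mxP S_diag; apply/matrixP => i k; rewrite (ord1 k) !mxE.
rewrite (bigD1 i) //= big1 ?addr0 // => j ji.
by rewrite S_diag ?mul0r // eq_sym.
Qed.

Lemma diag_formE (R : pzSemiRingType) n (S : 'M[R]_n) (u v : 'cV[R]_n) :
  is_diag_mx S -> (u^T *m S *m v) 0 0 = \sum_i u i 0 * (S i i * v i 0).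
Proof.
move=> S_diag; rewrite -mulmxA mul_diag_mx_col // col_dotE.
by under eq_bigr do rewrite mxE.
Qed.

Lemma diag_form_eq0 (R : realDomainType) n (S : 'M[R]_n) (w : 'cV[R]_n) :
  is_diag_mx S -> (forall i, 0 < S i i) -> (w^T *m S *m w) 0 0 = 0 -> w = 0.
Proof.
move=> S_diag S_pos; rewrite diag_formE //.
under eq_bigr do rewrite mulrCA -expr2.
move=> /psumr_eq0P w0; apply/matrixP => i k; rewrite (ord1 k) mxE.
have /eqP := w0 (fun j _ => mulr_ge0 (ltW (S_pos j)) (sqr_ge0 _)) i isT.
by rewrite mulf_eq0 gt_eqF //= sqrf_eq0 => /eqP.
Qed.

Lemma unitmx_diag (R : fieldType) n (S : 'M[R]_n) :
  is_diag_mx S -> (forall i, S i i != 0) -> S \in unitmx.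
Proof.
move=> S_diag S_neq0; rewrite unitmxE det_trig ?is_diag_mx_is_trig // unitfE.
by apply/prodf_neq0 => i _.
Qed.

Lemma proportional_scaled (R : fieldType) n (u v : 'cV[R]_n) (a b : R) :
  a *: u = b *: v -> (b = 0 -> u = 0) -> proportional u v.
Proof.
move=> uv u0; have [b0 | b_neq0] := eqVneq b 0.
  exists 1, 0; rewrite u0 // scaler0 scale0r.
  by split; first by left; exact: oner_neq0.
by exists a, b; split; first by right.
Qed.

(* No case v_L v_R = 0 or Z = 0 is excluded: both sides then vanish. *)
Lemma uncorrelated_combination (R : fieldType) n (wL wR xL xR : 'cV[R]_n)
    (vL vR sL sR c g Z : R) :
  c = 0 -> sL *: wL = vL *: xL -> sR *: wR = vR *: xR ->
  ((vR * sL - g * c * sR) / (vL * vR - g ^+ 2 * c ^+ 2) / Z) *: wL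
  + ((vL * sR - g * c * sL) / (vL * vR - g ^+ 2 * c ^+ 2) / Z) *: wR
  = (vL * vR / (vL * vR) / Z) *: (xL + xR).
Proof.
move=> -> eL eR; rewrite expr0n /= !(mulr0, mul0r, subr0).
rewrite [vR * sL / _]mulrAC [vR / _ * sL / Z]mulrAC.
rewrite [vL * sR / _]mulrAC [vL / _ * sR / Z]mulrAC.
rewrite -!scalerA eL eR !scalerA scalerDr.
by congr (_ *: _ + _ *: _); ring.
Qed.

Section DiagonalHRP.
Variables (R : realFieldType) (N : nat).
Variables (Sigma : 'M[R]_N) (mu : 'cV[R]_N) (gamma : R).

Local Notation weights := (hrp_weights Sigma mu gamma).
Local Notation variance w := ((w^T *m Sigma *m w) 0 0).
Local Notation mean w := ((w^T *m mu) 0 0).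

Lemma hrpE t :
  hrp Sigma mu gamma t = (weights t, variance (weights t), mean (weights t)).
Proof.
case: t => [i|l r]; last first.
  rewrite /hrp_weights /=.
  by case: (hrp _ _ _ l) => [[? ?] ?]; case: (hrp _ _ _ r) => [[? ?] ?].
rewrite /hrp_weights /=.
have -> : \col_j (j == i)%:R = delta_mx i 0 :> 'cV[R]_N.
  by apply/matrixP => j k; rewrite (ord1 k) !mxE eqxx andbT.
by rewrite trmx_delta -!rowE -colE !mxE.
Qed.

Definition supported_on (A : seq 'I_N) (w : 'cV[R]_N) :=
  forall j, j \notin A -> w j 0 = 0.

Definition markowitz_on (A : seq 'I_N) : 'cV[R]_N :=
  \col_j ((j \in A)%:R * (mu j 0 / Sigma j j)).

Lemma hrp_weights_supported t : supported_on (leaves t) (weights t).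
Proof.
elim: t => [i | l IHl r IHr] j /=.
  by rewrite inE mxE => /negbTE ->.
rewrite mem_cat negb_or => /andP[jl jr].
by rewrite /hrp_weights /= (hrpE l) (hrpE r) /= !mxE IHl // IHr // !mulr0 addr0.
Qed.

Lemma markowitz_on_cat A B : ~~ has [in A] B ->
  markowitz_on (A ++ B) = markowitz_on A + markowitz_on B.
Proof.
move=> /hasPn AB; apply/matrixP => j k; rewrite !mxE mem_cat.
have [jB | jB] := boolP (j \in B).
  by move: (AB j jB); rewrite /= => /negbTE ->; rewrite mul0r add0r.
by rewrite orbF mul0r addr0.
Qed.

Hypothesis Sigma_diag : is_diag_mx Sigma.
Hypothesis Sigma_pos : forall i, 0 < Sigma i i.

Let Sigma_neq0 i : Sigma i i != 0. Proof. by rewrite gt_eqF. Qed.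

Lemma supported_disjoint_form0 {A B u v} : ~~ has [in A] B ->
  supported_on A u -> supported_on B v -> (u^T *m Sigma *m v) 0 0 = 0.
Proof.
move=> /hasPn AB uA vB; rewrite diag_formE // big1 // => j _.
have [jB | jB] := boolP (j \in B); last by rewrite vB ?mulr0.
by rewrite uA ?mul0r // AB.
Qed.

Lemma markowitz_form A :
  variance (markowitz_on A) = mean (markowitz_on A).
Proof.
rewrite diag_formE // col_dotE; apply: eq_bigr => j _; rewrite !mxE.
case: (j \in A); rewrite /= ?mul0r // mul1r.
by rewrite [Sigma j j * _]mulrC divfK.
Qed.

Lemma markowitz_scaled_identity (b : R) A :
  mean (b *: markowitz_on A) *: (b *: markowitz_on A)
  = variance (b *: markowitz_on A) *: markowitz_on A.
Proof.
have -> : (b *: markowitz_on A)^T = b *: (markowitz_on A)^T by rewrite linearZ.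
rewrite -!scalemxAl -scalemxAr !scalerA.
rewrite [(_ *: (_ *m mu)) 0 0]mxE [(_ *: (_ *m Sigma *m _)) 0 0]mxE.
by rewrite markowitz_form mulrAC.
Qed.

Lemma hrp_markowitz_identity t : uniq (leaves t) ->
  mean (weights t) *: weights t
  = variance (weights t) *: markowitz_on (leaves t).
Proof.
elim: t => [i | l IHl r IHr] /=.
  move=> _; case: (hrpE (BLeaf i)) => <- <-; rewrite /hrp_weights /=.
  apply/matrixP => j k; rewrite !mxE inE.
  have [->|_] := eqVneq j i; rewrite /= !(mulr0, mul0r, mul1r, mulr1) //.
  by rewrite mulrC divfK.
rewrite cat_uniq => /and3P[ul dis ur].
suff [b ->] :
    exists b, weights (BNode l r) = b *: markowitz_on (leaves l ++ leaves r).
  exact: markowitz_scaled_identity.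
rewrite markowitz_on_cat // /hrp_weights /= (hrpE l) (hrpE r) /=.
eexists; apply: uncorrelated_combination.
- by apply: (supported_disjoint_form0 dis); apply: hrp_weights_supported.
- exact: IHl ul.
- exact: IHr ur.
Qed.

Lemma markowitz_on_all A :
  (forall j, j \in A) -> markowitz_on A = invmx Sigma *m mu.
Proof.
move=> Aall; have <- : Sigma *m markowitz_on A = mu.
  apply/matrixP => j k; rewrite mul_diag_mx_col // (ord1 k) !mxE Aall mul1r.
  by field.
by rewrite mulKmx // unitmx_diag.
Qed.

End DiagonalHRP.

Theorem mainTheorem15 (R : realFieldType) (N : nat)
    (Sigma : 'M[R]_N) (mu : 'cV[R]_N) (gamma : R) (t : btree N) :
  is_diag_mx Sigma ->
  (forall i : 'I_N, 0 < Sigma i i) ->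
  0 <= gamma <= 1 ->
  tree_on_assets t ->
  proportional (hrp_weights Sigma mu gamma t) (invmx Sigma *m mu).
Proof.
move=> Sigma_diag Sigma_pos _ t_assets.
have t_uniq : uniq (leaves t) by rewrite (perm_uniq t_assets) enum_uniq.
have t_all j : j \in leaves t by rewrite (perm_mem t_assets) mem_enum.
rewrite -(markowitz_on_all mu Sigma_diag Sigma_pos t_all).
have := hrp_markowitz_identity mu gamma Sigma_diag Sigma_pos t_uniq.
move/proportional_scaled; apply.
exact: diag_form_eq0.
Qed.
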